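(* Let $k\ge 1$ and $1\le k^*\le k$ be integers, and run the Reduce-By-Median-Counter algorithm (defined in the context) with parameters $k,k^*$ on a weighted stream. Then for every integer $0\le j<k^*$ and every item $i\in[m]$, the estimate $\hat f_i$ returned by Estimate$(i)$ after processing the stream satisfies $$0\le f_i-\hat f_i\le \frac{N^{\mathrm{res}(j)}}{k^*-j}.$$
   Context: A weighted stream over the universe $[m]=\{1,\dots,m\}$ is a sequence of updates $(i_1,\Delta_1),\dots,(i_n,\Delta_n)$ with $i_t\in[m]$ and real weights $\Delta_t>0$. The frequency of $i$ is $f_i=\sum_{t: i_t=i}\Delta_t$, and $N=\sum_t\Delta_t$. $N^{\mathrm{res}(j)}$ denotes the sum of the frequencies of all items except the $j$ items of largest frequency (ties broken arbitrarily). The Reduce-By-Median-Counter algorithm with integer parameters $k\ge 1$ and $1\le k^*\le k$ maintains a set $T\subseteq[m]$ of at most $k$ items, each $j\in T$ carrying a nonnegative real counter $c(j)$; initially $T=\emptyset$. Update$(i,\Delta)$: if $i\in T$, set $c(i)\gets c(i)+\Delta$; else if $|T|<k$, add $i$ to $T$ with $c(i)=\Delta$; else call DecrementCounters(), and afterwards, if $\Delta\ge c_{k^*}$, add $i$ to $T$ with $c(i)=\Delta-c_{k^*}$. DecrementCounters(): let $c_{k^*}$ be the $k^*$-th largest value, counting multiplicity, of the multiset $\{c(j): j\in T\}$; for every $j\in T$ set $c(j)\gets c(j)-c_{k^*}$, and remove $j$ from $T$ if now $c(j)\le 0$. Estimate$(i)$ returns $c(i)$ if $i\in T$ and $0$ otherwise.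 *)

(* Reduce-By-Median-Counter over the universe 'I_m
   (items 0..m-1 stand for 1..m), weights in a real field R. *)
From HB Require Import structures.
From mathcomp Require Import all_boot all_order all_algebra.
Set Implicit Arguments. Unset Strict Implicit. Unset Printing Implicit Defensive.
Import Order.TTheory GRing.Theory Num.Theory.
Local Open Scope ring_scope.

Section RBMC.
Variables (R : realFieldType) (m : nat).

Definition stream := seq ('I_m * R).

(* The algorithm state: the set T with counters, as a list of (item, counter)
   pairs (items pairwise distinct by construction). *)
Definition state := seq ('I_m * R).

Definition inT (T : state) (i : 'I_m) : bool := i \in map fst T.

Definition kth_largest (k' : nat) (s : seq R) : R :=
  nth 0 (sort (fun x y : R => y <= x) s) k'.-1.

Definition decrement_by (cs : R) (T : state) : state :=
  filter (fun p => 0 < p.2) (map (fun p => (p.1, p.2 - cs)) T).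

Definition update (k ks : nat) (T : state) (u : 'I_m * R) : state :=
  let: (i, d) := u in
  if inT T i then map (fun p => if p.1 == i then (p.1, p.2 + d) else p) T
  else if (size T < k)%N then rcons T (i, d)
  else let cs := kth_largest ks (map snd T) in
       let T' := decrement_by cs T in
       if cs <= d then rcons T' (i, d - cs) else T'.

Definition run (k ks : nat) (s : stream) : state := foldl (update k ks) [::] s.

Definition estimate (T : state) (i : 'I_m) : R :=
  if inT T i then nth 0 (map snd T) (index i (map fst T)) else 0.

Definition freq (s : stream) (i : 'I_m) : R := \sum_(u <- s | u.1 == i) u.2.

Definition total (s : stream) : R := \sum_(u <- s) u.2.

Definition Nres (s : stream) (j : nat) : R :=
  \sum_(x <- drop j (sort (fun x y : R => y <= x) [seq freq s i | i <- enum 'I_m])) x.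

End RBMC.

(* Call f_a - \hat f_a the loss of item a.  An update whose item is in T, or
   finds room in T, leaves all losses unchanged.  An update that decrements by
   the k*-th largest counter c raises the loss of every item a by min(v_a, c),
   where v_a is its counter with the new weight included; this increment lies
   in [0, c] and equals c on the at least k* items whose counter was >= c.
   Such a vector e satisfies (k* - |H|) e_a <= sum_{b \notin H} e_b for every
   set H of items, and these inequalities are stable under sums, so the final
   loss vector satisfies them too.  Taking for H the j most frequent items and
   bounding the losses outside H by the frequencies gives the theorem. *)

From HB Require Import structures.
From mathcomp Require Import all_boot all_order all_algebra.
Set Implicit Arguments. Unset Strict Implicit. Unset Printing Implicit Defensive.
Import Order.TTheory GRing.Theory Num.Theory.
Local Open Scope ring_scope.

Section TailBounded.
Variables (R : realFieldType) (I : finType) (n : nat).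
Implicit Types (e v : I -> R) (H : {set I}).

Definition tail_bounded e :=
  forall a, 0 <= e a /\ forall H, (n - #|H|)%:R * e a <= \sum_(b in ~: H) e b.

Lemma eq_tail_bounded e1 e2 : e1 =1 e2 -> tail_bounded e1 -> tail_bounded e2.
Proof.
move=> e12 tb a; have [e0 tail] := tb a.
by rewrite -e12; split=> // H; rewrite -(eq_bigr _ (fun b _ => e12 b)).
Qed.

Lemma tail_bounded0 : tail_bounded (fun=> 0).
Proof. by move=> a; split=> // H; rewrite mulr0 big1. Qed.

Lemma tail_boundedD e1 e2 :
  tail_bounded e1 -> tail_bounded e2 -> tail_bounded (fun a => e1 a + e2 a).
Proof.
move=> tb1 tb2 a; have [e10 tail1] := tb1 a; have [e20 tail2] := tb2 a.
split=> [|H]; first exact: addr_ge0.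
by rewrite big_split mulrDr lerD.
Qed.

Lemma tail_bounded_min v (c : R) : (forall a, 0 <= v a) -> 0 <= c ->
  (n <= #|[set a | (c <= v a)%R]|)%N -> tail_bounded (fun a => Num.min (v a) c).
Proof.
move=> v0 c0 big_v; set S := [set a | c <= v a] in big_v.
have min0 a : 0 <= Num.min (v a) c by rewrite le_min v0.
move=> a; split=> // H.
have size_SH : (n - #|H| <= #|S :\: H|)%N.
  by rewrite cardsD leq_sub //; apply: subset_leq_card; rewrite subsetIr.
have min_S b : b \in S -> Num.min (v b) c = c by rewrite inE => /min_r.
apply: (@le_trans _ _ (\sum_(b in S :\: H) Num.min (v b) c)).
  rewrite (eq_bigr (fun=> c)) => [|b]; last by rewrite inE => /andP[_ /min_S].
  by rewrite sumr_const -[c *+ _]mulr_natl ler_pM ?ler_nat // ge_min lexx orbT.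
by rewrite [X in _ <= X](big_setID S) /= setIC -setDE lerDl sumr_ge0.
Qed.

End TailBounded.

Section Descending.
Variable R : realFieldType.
Implicit Types (l : seq R).

Let ge_total : total (fun x y : R => y <= x).
Proof. by move=> x y; rewrite le_total. Qed.

Let ge_trans : transitive (fun x y : R => y <= x).
Proof. by move=> x y z yx zy; apply: le_trans zy yx. Qed.

Lemma kth_largest_ge0 ks l : all (>= 0) l -> 0 <= kth_largest ks l.
Proof.
move=> /allP l0; rewrite /kth_largest.
have [lt_ks|ge_ks] := ltnP ks.-1 (size (sort (fun x y : R => y <= x) l)).
  by apply: l0; rewrite -(mem_sort (fun x y : R => y <= x)) mem_nth.
by rewrite nth_default.
Qed.

Lemma kth_largest_count ks l : (ks <= size l)%N ->
  (ks <= count (fun v => (kth_largest ks l <= v)%R) l)%N.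
Proof.
case: ks => [//|ks] ks_l; rewrite /kth_largest /=.
set S := sort _ l; have size_S : size S = size l by rewrite size_sort.
have sorted_S : sorted (fun x y : R => y <= x) S := sort_sorted ge_total l.
have /permP <- : perm_eq S l by rewrite perm_sort.
rewrite -[X in count _ X](cat_take_drop ks.+1 S) count_cat.
suff : all (fun v => nth 0 S ks <= v) (take ks.+1 S).
  by rewrite all_count => /eqP ->; rewrite size_takel ?size_S // leq_addr.
apply/(all_nthP 0) => t; rewrite size_takel ?size_S // => t_ks; rewrite nth_take //.
apply: (sorted_leq_nth ge_trans lexx _ sorted_S); rewrite ?inE ?size_S //.
exact: leq_trans t_ks ks_l.
Qed.

Lemma sum_drop_sort_image (I : finType) (f : I -> R) j :
  exists2 H : {set I}, (#|H| <= j)%N &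
    \sum_(x <- drop j (sort (fun x y : R => y <= x) [seq f a | a <- enum I])) x
      = \sum_(a in ~: H) f a.
Proof.
set e := sort (relpre f (fun x y : R => y <= x)) (enum I).
have uniq_e : uniq e by rewrite sort_uniq enum_uniq.
exists [set a in take j e].
  by rewrite cardsE (leq_trans (card_size _)) // size_take_min geq_minl.
rewrite sort_map -map_drop big_map -/e big_uniq ?drop_uniq //.
apply: eq_bigl => a; rewrite !inE.
have := uniq_e; rewrite -[X in uniq X](cat_take_drop j e) cat_uniq => /and3P[_ disjoint_e _].
have : a \in take j e ++ drop j e by rewrite cat_take_drop mem_sort mem_enum.
rewrite mem_cat; case: (boolP (a \in drop j e)) => [/(hasPn disjoint_e) -> //|_].
by rewrite orbF => ->.
Qed.

End Descending.

Section Estimate.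
Variables (R : realFieldType) (m : nat).
Implicit Types (T : state R m) (a i : 'I_m) (d c : R).

Definition valid_state T := uniq (map fst T) && all (fun p => 0 <= p.2) T.

Lemma estimate_cons b v T a :
  estimate ((b, v) :: T) a = if b == a then v else estimate T a.
Proof. by rewrite /estimate /inT /= in_cons eq_sym; case: eqP => //= _; case: ifP. Qed.

Lemma estimate_notin T a : ~~ inT T a -> estimate T a = 0.
Proof. by rewrite /estimate => /negbTE ->. Qed.

Lemma estimate_ge0 T a : all (fun p => 0 <= p.2) T -> 0 <= estimate T a.
Proof.
elim: T => [|[b v] T IH] //= /andP[v0 T0].
by rewrite estimate_cons; case: eqP => // _; apply: IH.
Qed.

Lemma estimate_mem T p : uniq (map fst T) -> p \in T -> estimate T p.1 = p.2.
Proof.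
elim: T => [|[b v] T IH] //= /andP[bT uT]; rewrite in_cons estimate_cons.
case/orP=> [/eqP-> | pT]; first by rewrite eqxx.
case: eqP => [eb|_]; last exact: IH.
by move: bT; rewrite eb (map_f fst pT).
Qed.

Lemma estimate_bump T i d a :
  estimate [seq if p.1 == i then (p.1, p.2 + d) else p | p <- T] a
    = estimate T a + (if (i == a) && inT T i then d else 0).
Proof.
elim: T => [|[b v] T IH]; first by rewrite andbF addr0.
rewrite /inT /= in_cons -/(inT T i); case: (eqVneq b i) => [->|bi] /=.
  rewrite !estimate_cons andbT.
  by case: (eqVneq i a) => [_|ia]; rewrite // IH (negbTE ia) !addr0.
rewrite !estimate_cons; case: (eqVneq b a) => [ba|_]; last exact: IH.
by rewrite -ba eq_sym (negbTE bi) addr0.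
Qed.

Lemma estimate_rcons T i d a : ~~ inT T i ->
  estimate (rcons T (i, d)) a = estimate T a + (if i == a then d else 0).
Proof.
elim: T => [|[b v] T IH] /=.
  by rewrite estimate_cons; case: eqP; rewrite ?add0r.
rewrite /inT /= in_cons negb_or -/(inT T i) => /andP[ib iT].
rewrite !estimate_cons; case: (eqVneq b a) => [ba|_]; last exact: IH.
by rewrite -ba (negbTE ib) addr0.
Qed.

Lemma keys_decrement_by T c : subseq (map fst (decrement_by c T)) (map fst T).
Proof. by rewrite /decrement_by filter_map -map_comp; exact/map_subseq/filter_subseq. Qed.

Lemma inT_decrement_by T c i : ~~ inT T i -> ~~ inT (decrement_by c T) i.
Proof. by apply: contra; apply/mem_subseq/keys_decrement_by. Qed.

Lemma estimate_decrement_by T c a : uniq (map fst T) -> 0 <= c ->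
  estimate (decrement_by c T) a = Num.max (estimate T a - c) 0.
Proof.
move=> + c0; elim: T => [|[b v] T IH] /=.
  by rewrite sub0r max_r // oppr_le0.
move=> /andP[bT uT]; rewrite /decrement_by /= -/(decrement_by c T).
case: ifP => [vc|/negbT]; rewrite ?estimate_cons; case: (eqVneq b a) => [ba|_]; rewrite ?IH //.
- by rewrite max_l // ltW.
- by rewrite -leNgt -ba => vc; rewrite estimate_notin // sub0r !max_r ?oppr_le0.
Qed.

Lemma card_estimate_ge T c : uniq (map fst T) ->
  (count (fun p => (c <= p.2)%R) T <= #|[set a | (c <= estimate T a)%R]|)%N.
Proof.
move=> uT; set K := map fst (filter (fun p => c <= p.2) T).
have uK : uniq K by apply: subseq_uniq uT; exact/map_subseq/filter_subseq.
rewrite -size_filter -(size_map fst) -/K -(card_uniqP uK).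
apply/subset_leq_card/subsetP => a /mapP[p]; rewrite mem_filter => /andP[cp pT] ->.
by rewrite inE estimate_mem.
Qed.

Lemma valid_state_bump T i d : valid_state T -> 0 <= d ->
  valid_state [seq if p.1 == i then (p.1, p.2 + d) else p | p <- T].
Proof.
move=> /andP[uT T0] d0; rewrite /valid_state all_map -map_comp.
rewrite (eq_map (_ : _ =1 fst)) ?uT => [/=|p /=]; last by case: ifP.
apply/allP => p pT /=; have := allP T0 p pT.
by case: ifP => //= _ p0; apply: addr_ge0.
Qed.

Lemma valid_state_rcons T i d : valid_state T -> ~~ inT T i -> 0 <= d ->
  valid_state (rcons T (i, d)).
Proof.
move=> /andP[uT T0] iT d0.
by rewrite /valid_state map_rcons rcons_uniq all_rcons iT uT T0 d0.
Qed.

Lemma valid_state_decrement_by T c : valid_state T -> valid_state (decrement_by c T).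
Proof.
move=> /andP[uT _]; rewrite /valid_state (subseq_uniq (keys_decrement_by T c) uT).
by rewrite all_filter; apply/allP => p _; apply/implyP => /ltW.
Qed.

Lemma card_kth_largest_le_estimate ks T : valid_state T -> (ks <= size T)%N ->
  (ks <= #|[set a | (kth_largest ks (map snd T) <= estimate T a)%R]|)%N.
Proof.
move=> /andP[uT _] ks_T; rewrite -(size_map snd) in ks_T.
by apply: leq_trans (kth_largest_count ks_T) _; rewrite count_map card_estimate_ge.
Qed.

Lemma freq_rcons (s : stream R m) i d a :
  freq (rcons s (i, d)) a = freq s a + (if i == a then d else 0).
Proof. by rewrite /freq big_rcons. Qed.

End Estimate.

Section Update.
Variables (R : realFieldType) (m k ks : nat).
Implicit Types (T : state R m) (i : 'I_m) (d : R).

Lemma update_valid T u : valid_state T -> 0 <= u.2 -> valid_state (update k ks T u).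
Proof.
case: u => i d vT /= d0; rewrite /update.
case: ifP => iT; first exact: valid_state_bump.
case: ifP => _; first by apply: valid_state_rcons; rewrite ?iT.
set c := kth_largest ks _; have vT1 := valid_state_decrement_by c vT.
case: ifP => cd //; apply: valid_state_rcons; rewrite ?subr_ge0 //.
by apply: inT_decrement_by; rewrite iT.
Qed.

Lemma estimate_update_decrement T i d a :
  valid_state T -> 0 <= d -> ~~ inT T i -> (k <= size T)%N ->
  estimate (update k ks T (i, d)) a
    = Num.max (estimate T a + (if i == a then d else 0) - kth_largest ks (map snd T)) 0.
Proof.
move=> vT d0 iT k_T; have /andP[uT T0] := vT.
rewrite /update (negbTE iT) ltnNge k_T /=; set c := kth_largest ks _.
have c0 : 0 <= c by apply: kth_largest_ge0; rewrite all_map.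
have iT1 := inT_decrement_by c iT.
case: ifP => cd; rewrite ?estimate_rcons // estimate_decrement_by //;
  case: (eqVneq i a) => [<-|_]; rewrite ?addr0 // estimate_notin //;
  rewrite !add0r max_r ?oppr_le0 //.
- by rewrite add0r max_l ?subr_ge0.
- by rewrite max_r ?subr_le0 // ltW // ltNge cd.
Qed.

Hypothesis ks_le_k : (ks <= k)%N.

Lemma update_loss T i d : valid_state T -> 0 <= d ->
  tail_bounded ks (fun a => estimate T a + (if i == a then d else 0)
                            - estimate (update k ks T (i, d)) a).
Proof.
move=> vT d0; have /andP[_ T0] := vT.
have [iT|iT] := boolP (inT T i).
  apply: eq_tail_bounded (tail_bounded0 _ _) => a.
  by rewrite /update iT estimate_bump iT andbT subrr.
have [T_k|k_T] := ltnP (size T) k.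
  apply: eq_tail_bounded (tail_bounded0 _ _) => a.
  by rewrite /update (negbTE iT) T_k estimate_rcons ?subrr.
set c := kth_largest ks (map snd T).
set v := fun a => estimate T a + (if i == a then d else 0).
have c0 : 0 <= c by apply: kth_largest_ge0; rewrite all_map.
have v0 a : 0 <= v a by rewrite addr_ge0 ?estimate_ge0 //; case: ifP.
have many : (ks <= #|[set a | (c <= v a)%R]|)%N.
  apply: leq_trans (card_kth_largest_le_estimate vT (leq_trans ks_le_k k_T)) _.
  apply/subset_leq_card/subsetP => a; rewrite !inE => /le_trans; apply.
  by rewrite lerDl; case: ifP.
apply: eq_tail_bounded (tail_bounded_min v0 c0 many) => a.
rewrite estimate_update_decrement // -/c -/(v a); case: (lerP (v a) c) => vc.
  by rewrite max_r ?subr_le0 // subr0.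
by rewrite max_l ?subr_ge0 ?ltW // subKr.
Qed.

Lemma run_invariant (s : stream R m) : (forall u, u \in s -> 0 <= u.2) ->
  valid_state (run k ks s) /\ tail_bounded ks (fun a => freq s a - estimate (run k ks s) a).
Proof.
elim/last_ind: s => [|s [i d] IH] s0.
  split=> //; apply: eq_tail_bounded (tail_bounded0 _ _) => a.
  by rewrite /freq big_nil subr0.
have /IH [valid_T loss_T] : forall u, u \in s -> 0 <= u.2.
  by move=> u us; apply: s0; rewrite mem_rcons in_cons us orbT.
have d0 : 0 <= d by apply: (s0 (i, d)); rewrite mem_rcons mem_head.
rewrite /run foldl_rcons -/(run k ks s); split; first exact: update_valid.
apply: eq_tail_bounded (tail_boundedD loss_T (update_loss i valid_T d0)) => a.
by rewrite freq_rcons addrA subrKA.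
Qed.

End Update.

Theorem theorem5 (R : realFieldType) (m k ks : nat) (s : stream R m)
  (hk : (1 <= k)%N) (hks1 : (1 <= ks)%N) (hks2 : (ks <= k)%N)
  (hpos : forall u, u \in s -> 0 < u.2)
  (j : nat) (hj : (j < ks)%N) (i : 'I_m) :
  0 <= freq s i - estimate (run k ks s) i /\
  freq s i - estimate (run k ks s) i <= Nres s j / (ks - j)%:R.
Proof.
have [/andP[_ counters0] loss] := run_invariant hks2 (fun u us => ltW (hpos u us)).
have [loss_i0 loss_i] := loss i; split=> //.
rewrite /Nres; have [H H_j ->] := sum_drop_sort_image (freq s) j.
rewrite ler_pdivlMr ?ltr0n ?subn_gt0 // mulrC.
apply: le_trans (le_trans _ (loss_i H)) _.
  by rewrite ler_wpM2r // ler_nat leq_sub2l.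
by apply: ler_sum => a _; rewrite gerBl estimate_ge0.
Qed.
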